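(* Let $G\subset\mathbb{R}^d$ be a bounded domain with $C^3$ boundary, let $f:\bar G\to[0,\infty)$ satisfy: $f_{\min}:=\inf_{x\in\bar G}f(x)>0$, $f$ has a unique minimizer in $\bar G$, and $|f(x)-f(y)|\le L_f|x-y|$ for all $x,y\in\bar G$. Let $\alpha,\beta,\sigma>0$. For $\mu\in\mathcal P(\bar G)$ set $\bar X^\mu=\int_{\bar G}xe^{-\alpha f(x)}\mu(dx)\big/\int_{\bar G}e^{-\alpha f(x)}\mu(dx)$ and define $$b(t,x,\mu)=\beta(x-\bar X^\mu),\qquad\sigma(t,x,\mu)=\sigma\,\mathrm{Diag}(x-\bar X^\mu).$$ Then there exists $L>0$ such that for all $t\ge0$, $x,y\in\bar G$ and $\mu^1,\mu^2\in\mathcal P(\bar G)$, $$|b(t,x,\mu^1)-b(t,y,\mu^2)|+|\sigma(t,x,\mu^1)-\sigma(t,y,\mu^2)|\le L\big(|x-y|+\mathcal W_4(\mu^1,\mu^2)\big),$$ and $b,\sigma$ are continuous in $t$.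
   Context: $\mathcal P(\bar G)$ is the set of Borel probability measures on $\bar G$; $\mathcal W_4$ is the Wasserstein 4-distance; $\mathrm{Diag}(v)$ is the diagonal matrix with diagonal $v$; the matrix norm is the Frobenius norm. *)

From HB Require Import structures.
From mathcomp Require Import all_boot all_order all_algebra.
From mathcomp Require Import all_classical all_reals all_analysis.
Set Implicit Arguments. Unset Strict Implicit. Unset Printing Implicit Defensive.
Import Order.TTheory GRing.Theory Num.Theory.
Import numFieldNormedType.Exports.
Local Open Scope classical_set_scope.
Local Open Scope ring_scope.

Section Defs.
Variables (R : realType) (d : nat).

Definition fnorm m n (A : 'M[R]_(m, n)) : R :=
  Num.sqrt (\sum_(i < m) \sum_(j < n) (A i j) ^+ 2).

Definition enorm (x : 'rV[R]_d) : R := fnorm x.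

Fixpoint Ck (k : nat) (f : 'rV[R]_d -> R) : Prop :=
  match k with
  | 0%N => continuous f
  | k.+1 => continuous f /\
      forall v : 'rV[R]_d, (forall x, derivable f x v) /\ Ck k ('D_v f)
  end.

Definition bounded_domain (G : set 'rV[R]_d) : Prop :=
  G !=set0 /\ open G /\ connected G /\ exists M : R, forall x, G x -> enorm x <= M.

(* C^3 boundary (local defining function): around every boundary point x0 there
   are r > 0 and a C^3 function phi with nonvanishing gradient on the ball
   such that G coincides with {phi < 0} in the ball *)
Definition C3_boundary (G : set 'rV[R]_d) : Prop :=
  forall x0, (closure G `\` G) x0 ->
    exists r : R, 0 < r /\ exists phi : 'rV[R]_d -> R, Ck 3 phi /\
      forall x, enorm (x - x0) < r ->
        (exists v, 'D_v phi x != 0) /\ (G x <-> phi x < 0).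

Definition Rd := g_sigma_algebraType (@open 'rV[R]_d).

(* P(Gbar): Borel probability measures on R^d concentrated on Gbar *)
Definition probOn (Gbar : set 'rV[R]_d) (mu : probability Rd R) : Prop :=
  mu (Gbar : set Rd) = 1%E.

Definition is_coupling (mu nu : probability Rd R) (pi : probability (Rd * Rd)%type R) : Prop :=
  forall A : set Rd, measurable A ->
    pi (fst @^-1` A) = mu A /\ pi (snd @^-1` A) = nu A.

Definition W4 (mu nu : probability Rd R) : R :=
  powR (fine (ereal_inf [set c | exists pi, is_coupling mu nu pi /\
      c = (\int[pi]_z ((enorm ((z.1 : 'rV[R]_d) - z.2)) ^+ 4)%:E)%E])) (4%:R^-1).

Definition Xbar (Gbar : set 'rV[R]_d) (alpha : R) (f : 'rV[R]_d -> R)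
  (mu : probability Rd R) : 'rV[R]_d :=
  \row_i ((\int[mu]_(x in (Gbar : set Rd)) ((x : 'rV[R]_d) 0 i * expR (- alpha * f x)))
          / (\int[mu]_(x in (Gbar : set Rd)) expR (- alpha * f x))).

Definition bdrift Gbar alpha f (beta : R) (t : R) (x : 'rV[R]_d) mu : 'rV[R]_d :=
  beta *: (x - Xbar Gbar alpha f mu).

Definition sdiff Gbar alpha f (sigma : R) (t : R) (x : 'rV[R]_d) mu : 'M[R]_d :=
  sigma *: diag_mx (x - Xbar Gbar alpha f mu).

End Defs.

From HB Require Import structures.
From mathcomp Require Import all_boot all_order all_algebra.
From mathcomp Require Import all_classical all_reals all_analysis.
From mathcomp Require Import measurable_realfun ring lra.
Set Implicit Arguments. Unset Strict Implicit. Unset Printing Implicit Defensive.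
Import Order.TTheory GRing.Theory Num.Theory.
Import numFieldNormedType.Exports.
Local Open Scope classical_set_scope.
Local Open Scope ring_scope.

(* The drift and the diffusion are both affine images of x - Xbar^mu, so the
   estimate reduces to Lipschitz continuity of mu |-> Xbar^mu for W4 on
   probability measures carried by the compact set closure G.  Each coordinate
   of Xbar^mu is the quotient of the integrals of the bounded Lipschitz
   functions x_j e^{-alpha f(x)} and e^{-alpha f(x)}, the denominator being at
   least e^{-alpha max f} > 0.  For a K-Lipschitz g and a coupling pi of mu1 and
   mu2, the pointwise bound |x - y| <= w + |x - y|^4 / w^3 gives
   |int g dmu1 - int g dmu2| <= K w + (K / w^3) int |x - y|^4 dpi; taking pi
   nearly optimal and w close to W4(mu1, mu2) yields 2 K W4(mu1, mu2).
   The coefficients do not depend on t, hence are continuous in t. *)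

Section EuclideanNorm.
Variables (R : realType) (d : nat).
Implicit Types (u v : 'rV[R]_d).

Lemma enormE v : enorm v = Num.sqrt (\sum_j v ord0 j ^+ 2).
Proof. by rewrite /enorm /fnorm big_ord1. Qed.

Lemma enorm_ge0 v : 0 <= enorm v.
Proof. by rewrite enormE sqrtr_ge0. Qed.

Lemma coord_le_enorm v i : `|v ord0 i| <= enorm v.
Proof.
rewrite enormE -sqrtr_sqr ler_wsqrtr // (bigD1 i) //= lerDl.
by rewrite sumr_ge0 // => j _; exact: sqr_ge0.
Qed.

Lemma enorm_le_sum v : enorm v <= \sum_j `|v ord0 j|.
Proof.
have s0 : 0 <= \sum_j `|v ord0 j| by rewrite sumr_ge0.
rewrite enormE -[leRHS](ger0_norm s0) -sqrtr_sqr ler_wsqrtr //.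
rewrite expr2 mulr_suml; apply: ler_sum => j _.
rewrite -real_normK ?num_real // expr2 ler_wpM2l // (bigD1 j) //= lerDl.
by rewrite sumr_ge0.
Qed.

Lemma enorm_le_coord_bound v (c : R) :
  (forall j, `|v ord0 j| <= c) -> enorm v <= d%:R * c.
Proof.
move=> vc; apply: le_trans (enorm_le_sum v) _.
have -> : d%:R * c = \sum_(j < d) c by rewrite sumr_const card_ord mulr_natl.
by apply: ler_sum => j _; exact: vc.
Qed.

Lemma enormZ (c : R) v : enorm (c *: v) = `|c| * enorm v.
Proof.
rewrite !enormE; under eq_bigr do rewrite mxE exprMn.
by rewrite -mulr_sumr sqrtrM ?sqr_ge0 // sqrtr_sqr.
Qed.

Lemma fnormZ_diag_mx (c : R) v : fnorm (c *: diag_mx v) = `|c| * enorm v.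
Proof.
rewrite -enormZ enormE /fnorm; congr Num.sqrt; apply: eq_bigr => i _.
rewrite (bigD1 i) //= big1 ?addr0 ?mxE ?eqxx ?mulr1n // => j /negbTE ji.
by rewrite !mxE eq_sym ji mulr0n mulr0 expr0n.
Qed.

Lemma diag_mxB u v : diag_mx (u - v) = diag_mx u - diag_mx v.
Proof. by apply/matrixP => i j; rewrite !mxE mulrnBl. Qed.

Lemma coord_le_mx_norm v i : `|v ord0 i| <= `|v|.
Proof.
rewrite [`|v|]mx_normrE.
exact: (le_bigmax _ (fun ij : 'I_1 * 'I_d => `|v ij.1 ij.2|) (ord0, i)).
Qed.

Lemma mx_norm_le_enorm v : `|v| <= enorm v.
Proof.
rewrite [`|v|]mx_normrE; apply: bigmax_le => [|[i j] _ /=].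
  exact: enorm_ge0.
by rewrite (ord1 i); exact: coord_le_enorm.
Qed.

Lemma enorm_le_mx_norm v : enorm v <= d%:R * `|v|.
Proof. by apply: enorm_le_coord_bound => j; exact: coord_le_mx_norm. Qed.

Lemma enorm_sub_le_coord_bound u v (c : R) :
  (forall j, `|u ord0 j| <= c) -> (forall j, `|v ord0 j| <= c) ->
  enorm (u - v) <= d%:R * (2 * c).
Proof.
move=> uc vc; apply: enorm_le_coord_bound => j; rewrite !mxE mulr_natl mulr2n.
by apply: le_trans (ler_normB _ _) _; rewrite lerD.
Qed.

Lemma enorm_sub_shift_le (u v a b : 'rV[R]_d) (C W : R) : 0 <= C -> 0 <= W ->
  (forall j, `|a ord0 j - b ord0 j| <= C * W) ->
  enorm ((u - a) - (v - b)) <= d%:R * ((1 + C) * (enorm (u - v) + W)).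
Proof.
move=> C0 W0 abCW; apply: enorm_le_coord_bound => j; rewrite !mxE.
have -> : u ord0 j - a ord0 j - (v ord0 j - b ord0 j) =
    (u ord0 j - v ord0 j) - (a ord0 j - b ord0 j) by ring.
apply: le_trans (ler_normB _ _) _.
have := coord_le_enorm (u - v) j; rewrite !mxE.
have := abCW j; have := mulr_ge0 C0 (enorm_ge0 (u - v)); nra.
Qed.

End EuclideanNorm.

Lemma closure_coord_le (R : realType) (d : nat) (G : set 'rV[R]_d) (M : R) :
  (forall x, G x -> enorm x <= M) ->
  forall x, closure G x -> forall j, `|x ord0 j| <= `|M| + 1.
Proof.
move=> GM x Gx j; have r0 : 0 < `|M| + 1 by rewrite ltr_wpDl.
have : closed_ball (0 : 'rV[R]_d) (`|M| + 1) x.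
  have /closure_id -> := @closed_ball_closed _ _ (0 : 'rV[R]_d) (`|M| + 1).
  apply: closureS x Gx => y Gy; rewrite closed_ballE // /closed_ball_ /= sub0r normrN.
  apply: le_trans (mx_norm_le_enorm y) _; apply: le_trans (GM y Gy) _.
  by rewrite (le_trans (ler_norm M)) // lerDl.
rewrite closed_ballE // /closed_ball_ /= sub0r normrN.
exact: le_trans (coord_le_mx_norm x j).
Qed.

Section BorelRd.
Variables (R : realType) (d : nat).
Local Notation Rd := (Rd R d).

Lemma Rd_open_measurable (U : set 'rV[R]_d) : open U -> measurable (U : set Rd).
Proof. exact: sub_sigma_algebra. Qed.

Lemma Rd_closed_measurable (C : set 'rV[R]_d) : closed C -> measurable (C : set Rd).
Proof.
by move/closed_openC/Rd_open_measurable/measurableC; rewrite setCK.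
Qed.

Lemma Rd_continuous_measurable_fun (D : set 'rV[R]_d) (g : 'rV[R]_d -> R) :
  measurable (D : set Rd) -> {within D, continuous g} ->
  measurable_fun (D : set Rd) (g : Rd -> R).
Proof.
move=> mD /continuousP cg; apply: (measurability _ (RGenOpens.measurableE R)).
move=> _ [_ [a [b ->] <-]].
have /open_subspaceP [V oV VD] : open (g @^-1` `]a, b[ : set (subspace D)).
  exact/cg/interval_open.
by rewrite setIC -VD; apply: measurableI => //; exact: Rd_open_measurable.
Qed.

Lemma lipschitz_within_continuous (D : set 'rV[R]_d) (g : 'rV[R]_d -> R) (K : R) :
  (forall x y, D x -> D y -> `|g x - g y| <= K * enorm (x - y)) ->
  {within D, continuous g}.
Proof.
move=> gK; apply/subspace_continuousP => x Dx; apply/cvgrPdist_lt => e e0.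
set c := (`|K| + 1) * (d%:R + 1).
have c0 : 0 < c by rewrite mulr_gt0 // ltr_wpDl.
have Kc y : K * enorm (x - y) <= c * `|x - y|.
  apply: le_trans (ler_wpM2r (enorm_ge0 _) (ler_norm K)) _.
  rewrite /c -mulrA; apply: ler_pM; rewrite ?enorm_ge0 ?lerDl //.
  by apply: le_trans (enorm_le_mx_norm _) _; rewrite ler_wpM2r // lerDl.
rewrite near_withinE; near=> y => Dy.
apply: le_lt_trans (gK _ _ Dx Dy) _; apply: le_lt_trans (Kc y) _.
rewrite -ltr_pdivlMl //; near: y.
apply/nbhs_ballP; exists (c^-1 * e) => /=; first by rewrite mulr_gt0 ?invr_gt0.
by move=> z; rewrite -ball_normE.
Unshelve. all: by end_near.
Qed.

Lemma lipschitz_measurable_fun (D : set 'rV[R]_d) (g : 'rV[R]_d -> R) (K : R) :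
  closed D -> (forall x y, D x -> D y -> `|g x - g y| <= K * enorm (x - y)) ->
  measurable_fun (D : set Rd) (g : Rd -> R).
Proof.
move=> cD gK; apply: Rd_continuous_measurable_fun.
  exact: Rd_closed_measurable.
exact: lipschitz_within_continuous gK.
Qed.

Lemma coord_measurable_fun (j : 'I_d) :
  measurable_fun setT (fun x : Rd => (x : 'rV[R]_d) ord0 j).
Proof.
apply: (@lipschitz_measurable_fun setT _ 1 closedT) => x y _ _.
by rewrite mul1r; have := coord_le_enorm (x - y) j; rewrite !mxE.
Qed.

Lemma dist4_measurable_fun : measurable_fun setT
  (fun z : Rd * Rd => enorm ((z.1 : 'rV[R]_d) - z.2) ^+ 4).
Proof.
have -> : (fun z : Rd * Rd => enorm ((z.1 : 'rV[R]_d) - z.2) ^+ 4) =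
    (fun z => (\sum_j ((z.1 : 'rV[R]_d) ord0 j - (z.2 : 'rV[R]_d) ord0 j) ^+ 2) ^+ 2).
  apply/funext => z; rewrite enormE (exprM _ 2 2) sqr_sqrtr.
    by under eq_bigr do rewrite !mxE.
  by rewrite sumr_ge0 // => j _; exact: sqr_ge0.
apply: measurable_funX; apply: measurable_sum => j; apply: measurable_funX.
by apply: measurable_funB; apply: measurableT_comp (coord_measurable_fun j) _.
Qed.

End BorelRd.

Lemma le_add_pow4_div (R : realFieldType) (t w : R) :
  0 <= t -> 0 < w -> t <= w + t ^+ 4 / w ^+ 3.
Proof.
move=> t0 w0; have w30 : 0 < w ^+ 3 by rewrite exprn_gt0.
rewrite -(ler_pM2r w30) mulrDl divfK ?gt_eqF //.
have [tw|wt] := lerP t w; first by rewrite ler_wpDr ?exprn_ge0 // ler_pM2r.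
have t_gt0 : 0 < t := lt_trans w0 wt.
rewrite ler_wpDl ?mulr_ge0 ?exprn_ge0 ?(ltW w0) // [t ^+ 4]exprS ler_pM2l //.
by rewrite lerXn2r ?nnegrE ?(ltW w0) ?(ltW wt).
Qed.

Lemma expR_lipschitz_nonpos (R : realType) (a b : R) :
  a <= 0 -> b <= 0 -> `|expR a - expR b| <= `|a - b|.
Proof.
wlog ab : a b / a <= b => [hw a0 b0|a0 b0].
  have [/hw|/ltW /hw] := leP a b; first exact.
  by rewrite distrC [`|a - b|]distrC; exact.
rewrite !ler0_norm ?subr_le0 ?ler_expR // !opprB.
have ea : expR a = expR b * expR (a - b) by rewrite -expRD addrC subrK.
have eb1 : expR b <= 1 by rewrite -expR0 ler_expR.
have := expR_ge1Dx (a - b); have := expR_gt0 b; nra.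
Qed.

Lemma dist_div_le (R : realFieldType) (N1 N2 D1 D2 m B : R) :
  0 < m -> m <= D1 -> m <= D2 -> `|N2| <= B ->
  `|N1 / D1 - N2 / D2| <= `|N1 - N2| / m + B * `|D1 - D2| / m ^+ 2.
Proof.
move=> m0 mD1 mD2 N2B.
have D10 : 0 < D1 := lt_le_trans m0 mD1.
have D20 : 0 < D2 := lt_le_trans m0 mD2.
have -> : N1 / D1 - N2 / D2 = (N1 - N2) / D1 + N2 * (D2 - D1) / (D1 * D2).
  by field; rewrite !gt_eqF.
apply: le_trans (ler_normD _ _) _; apply: lerD.
  by rewrite normrM normfV (gtr0_norm D10) ler_wpM2l // lef_pV2 ?posrE.
have D12 : 0 < D1 * D2 := mulr_gt0 D10 D20.
rewrite !normrM normfV (gtr0_norm D12) [`|D2 - D1|]distrC.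
apply: ler_pM.
- by rewrite mulr_ge0.
- by rewrite invr_ge0 ltW.
- by rewrite ler_wpM2r.
- by rewrite expr2 lef_pV2 ?posrE ?mulr_gt0 // ler_pM // ltW.
Qed.

Lemma probability_bounded_integrable {R : realType} {dX : measure_display}
    {X : measurableType dX} (mu : probability X R) (h : X -> R) (B : R) :
  measurable_fun setT h -> (forall x, `|h x| <= B) ->
  mu.-integrable setT (EFin \o h).
Proof.
move=> mh hB; apply: measurable_bounded_integrable => //.
  exact: (le_lt_trans (probability_le1 mu measurableT) (ltry _)).
exists B; split; first exact: num_real.
by move=> M BM x _; apply: le_trans (hB x) (ltW BM).
Qed.

Lemma integral_marginal {R : realType} {dX dY : measure_display}
    {X : measurableType dX} {Y : measurableType dY} (mu : probability X R) (pi : probability Y R) (p : Y -> X)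
    (h : X -> R) (B : R) :
  measurable_fun setT p -> (forall A, measurable A -> pi (p @^-1` A) = mu A) ->
  measurable_fun setT h -> (forall x, `|h x| <= B) ->
  (\int[mu]_x (h x)%:E = \int[pi]_y (h (p y))%:E)%E.
Proof.
move=> mp pmu mh hB.
rewrite (eq_measure_integral (pushforward pi p)) => [|A mA _]; last first.
  exact: esym (pmu A mA).
rewrite (integral_pushforward mp) ?preimage_setT //; first exact/measurable_EFinP.
exact: probability_bounded_integrable (measurableT_comp mh mp) (fun y => hB (p y)).
Qed.

Lemma integral_affine_probability {R : realType} {dX : measure_display}
    {X : measurableType dX} (mu : probability X R) (a c : R) (e : X -> R) :
  0 <= a -> 0 <= c -> (forall x, 0 <= e x) -> measurable_fun setT e ->
  (\int[mu]_x (a + c * e x)%:E = a%:E + c%:E * \int[mu]_x (e x)%:E)%E.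
Proof.
move=> a0 c0 e0 me.
under eq_integral do rewrite EFinD EFinM.
rewrite ge0_integralD //.
- rewrite integral_cst // [Z in (a%:E * Z)%E]probability_setT mule1.
  by rewrite ge0_integralZl //; [exact/measurable_EFinP | move=> x _; rewrite lee_fin].
- by move=> x _; rewrite -EFinM lee_fin mulr_ge0.
- by apply: measurable_funeM; exact/measurable_EFinP.
Qed.

Lemma Rintegral_bounds (R : realType) (d : nat) (mu : probability (Rd R d) R)
    (D : set 'rV[R]_d) (h : 'rV[R]_d -> R) (lo hi : R) :
  measurable (D : set (Rd R d)) -> measurable_fun (D : set (Rd R d)) h ->
  mu (D : set (Rd R d)) = 1%E -> (forall x, D x -> lo <= h x <= hi) ->
  lo <= Rintegral mu (D : set (Rd R d)) h <= hi.
Proof.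
move=> mD mh muD hb; have muDf : (mu (D : set (Rd R d)) < +oo)%E by rewrite muD ltry.
have int (k : 'rV[R]_d -> R) c : measurable_fun (D : set (Rd R d)) k ->
    (forall x, D x -> `|k x| <= c) -> mu.-integrable (D : set (Rd R d)) (EFin \o k).
  move=> mk kc; apply: measurable_bounded_integrable => //.
  exists c; split; first exact: num_real.
  by move=> M cM x Dx; apply: le_trans (kc x Dx) (ltW cM).
have hc x : D x -> `|h x| <= `|lo| + `|hi|.
  move=> Dx; have /andP[hlo hhi] := hb x Dx.
  have := normr_ge0 lo; have := normr_ge0 hi.
  have := ler_norm hi; have := ler_norm (- lo); rewrite normrN => l1 l2 l3 l4.
  by rewrite ler_norml; apply/andP; split; lra.
have cst_int c : mu.-integrable (D : set (Rd R d)) (EFin \o (fun=> c)).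
  by apply: (int _ `|c|) => // x _; exact: measurable_cst.
have fD : fine (mu (D : set (Rd R d))) = 1 by rewrite muD.
have ih := int _ _ mh hc.
apply/andP; split.
  rewrite -[lo]mulr1 -fD -Rintegral_cst //.
  by apply: le_Rintegral mD (cst_int lo) ih _ => x /hb /andP[].
rewrite -[hi]mulr1 -fD -Rintegral_cst //.
by apply: le_Rintegral mD ih (cst_int hi) _ => x /hb /andP[].
Qed.

Lemma product_is_coupling (R : realType) (d : nat) (mu1 mu2 : probability (Rd R d) R) :
  is_coupling mu1 mu2 (mu1 \x mu2)%E.
Proof.
move=> A mA; split.
  rewrite -setXT; transitivity (mu1 A * mu2 setT)%E; first exact: product_measure1E.
  by rewrite [X in (_ * X)%E]probability_setT mule1.
rewrite -setTX; transitivity (mu1 setT * mu2 A)%E; first exact: product_measure1E.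
by rewrite [X in (X * _)%E]probability_setT mul1e.
Qed.

Section Coupling.
Variables (R : realType) (d : nat).
Local Notation Rd := (Rd R d).
Variables (D : set 'rV[R]_d) (mu1 mu2 : probability Rd R)
  (pi : probability (Rd * Rd)%type R).
Hypotheses (cD : closed D) (mu1D : mu1 (D : set Rd) = 1%E)
  (mu2D : mu2 (D : set Rd) = 1%E) (pi12 : is_coupling mu1 mu2 pi).

Lemma coupling_ae_support : {ae pi, forall z : Rd * Rd, D z.1 /\ D z.2}.
Proof.
have mD : measurable (D : set Rd) := Rd_closed_measurable cD.
have null (p : Rd * Rd -> Rd) (mu : probability Rd R) : measurable_fun setT p ->
    (forall A, measurable A -> pi (p @^-1` A) = mu A) -> mu (D : set Rd) = 1%E ->
    pi.-negligible (p @^-1` ~` D).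
  move=> mp pmu muD; exists (p @^-1` ~` D); split => //.
    by rewrite -[X in measurable X]setTI; apply: mp => //; exact: measurableC.
  by rewrite pmu ?probability_setC ?muD ?subee //; exact: measurableC mD.
apply: negligibleS (negligibleU (null fst mu1 measurable_fst _ mu1D)
                                (null snd mu2 measurable_snd _ mu2D)).
- by move=> z /= /not_andP [] ?; [left|right].
- by move=> A mA; case: (pi12 mA).
- by move=> A mA; case: (pi12 mA).
Qed.

Lemma coupling_dist4_le (B : R) :
  (forall x y, D x -> D y -> enorm (x - y) <= B) ->
  (\int[pi]_z (enorm ((z.1 : 'rV[R]_d) - z.2) ^+ 4)%:E <= (B ^+ 4)%:E)%E.
Proof.
move=> DB; have pw4 (r : R) : 0 <= r ^+ 4 by rewrite exprn_even_ge0.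
apply: (@le_trans _ _ (\int[pi]_z (cst (B ^+ 4)%:E z))%E); last first.
  by rewrite integral_cst // [X in (_ * X)%E]probability_setT mule1.
apply: ae_ge0_le_integral => //.
- by move=> z _; rewrite lee_fin.
- by apply/measurable_EFinP; exact: dist4_measurable_fun.
- by move=> z _; rewrite lee_fin.
apply: filterS coupling_ae_support => z [D1 D2] _; rewrite lee_fin.
by rewrite lerXn2r ?nnegrE ?enorm_ge0 ?DB // (le_trans (enorm_ge0 _) (DB _ _ D1 D1)).
Qed.

Lemma coupling_Rintegral_sub_le (g : 'rV[R]_d -> R) (Bg : R) :
  measurable_fun (D : set Rd) g -> (forall x, D x -> `|g x| <= Bg) ->
  (`|Rintegral mu1 (D : set Rd) g - Rintegral mu2 (D : set Rd) g|%:E <=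
   \int[pi]_z `|((g \_ D) z.1 - (g \_ D) z.2)%:E|)%E.
Proof.
move=> mg gB; have mD : measurable (D : set Rd) := Rd_closed_measurable cD.
set gD := (g \_ D : Rd -> R).
have mgD : measurable_fun setT gD by apply/(measurable_restrictT _ mD).
have gDB x : `|gD x| <= `|Bg|.
  rewrite /gD /patch; case: ifP => [/set_mem Dx|_]; last by rewrite normr0.
  exact: le_trans (gB _ Dx) (ler_norm _).
have marg (p : Rd * Rd -> Rd) (mu : probability Rd R) : measurable_fun setT p ->
    (forall A, measurable A -> pi (p @^-1` A) = mu A) ->
    Rintegral mu (D : set Rd) g = Rintegral pi setT (gD \o p).
  move=> mp pmu; rewrite /Rintegral -(integral_marginal mp pmu mgD gDB).
  rewrite integral_mkcond; congr fine; apply: eq_integral => x _.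
  by rewrite /gD /patch; case: ifP.
rewrite (marg fst mu1 measurable_fst) => [|A mA]; last by case: (pi12 mA).
rewrite (marg snd mu2 measurable_snd) => [|A mA]; last by case: (pi12 mA).
have mgDp (p : Rd * Rd -> Rd) : measurable_fun setT p ->
    measurable_fun setT (gD \o p) by move=> mp; exact: measurableT_comp mgD mp.
have int (p : Rd * Rd -> Rd) : measurable_fun setT p ->
    pi.-integrable setT (EFin \o (gD \o p)).
  by move=> mp; exact: probability_bounded_integrable (mgDp p mp) (fun z => gDB (p z)).
rewrite -RintegralB ?int // EFin_normr_Rintegral //.
  apply: le_abse_integral => //; apply/measurable_EFinP.
  exact: measurable_funB (mgDp _ measurable_fst) (mgDp _ measurable_snd).
apply: (@probability_bounded_integrable _ _ _ _ _ (`|Bg| + `|Bg|)).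
  exact: measurable_funB (mgDp _ measurable_fst) (mgDp _ measurable_snd).
by move=> z; apply: le_trans (ler_normB _ _) _; rewrite lerD.
Qed.

Lemma coupling_Rintegral_lipschitz (g : 'rV[R]_d -> R) (K Bg w : R) :
  0 <= K -> 0 < w -> (forall x, D x -> `|g x| <= Bg) ->
  (forall x y, D x -> D y -> `|g x - g y| <= K * enorm (x - y)) ->
  (`|Rintegral mu1 (D : set Rd) g - Rintegral mu2 (D : set Rd) g|%:E <=
   (K * w)%:E + (K / w ^+ 3)%:E *
     \int[pi]_z (enorm ((z.1 : 'rV[R]_d) - z.2) ^+ 4)%:E)%E.
Proof.
move=> K0 w0 gB gK; have mD : measurable (D : set Rd) := Rd_closed_measurable cD.
have mg := lipschitz_measurable_fun cD gK.
apply: le_trans (coupling_Rintegral_sub_le mg gB) _.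
have c0 : 0 <= K / w ^+ 3 by rewrite divr_ge0 // exprn_ge0 // ltW.
have Kw0 : 0 <= K * w by rewrite mulr_ge0 // ltW.
have me := @dist4_measurable_fun R d.
have e0 (z : Rd * Rd) : 0 <= enorm ((z.1 : 'rV[R]_d) - z.2) ^+ 4.
  by rewrite exprn_ge0 ?enorm_ge0.
rewrite -(integral_affine_probability _ Kw0 c0 e0 me).
have mgD : measurable_fun setT (g \_ D : Rd -> R) by apply/(measurable_restrictT _ mD).
apply: ae_ge0_le_integral => //.
- apply/measurableT_comp/measurable_EFinP => //.
  exact: measurable_funB (measurableT_comp mgD _) (measurableT_comp mgD _).
- by move=> z _; rewrite lee_fin addr_ge0 // mulr_ge0.
- apply/measurable_EFinP; apply: measurable_funD => //.
  exact: measurable_funM.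
apply: filterS (coupling_ae_support) => z [D1 D2] _.
rewrite lee_fin /patch !mem_set //.
apply: le_trans (gK _ _ D1 D2) _.
rewrite mulrAC -mulrA -mulrDr ler_wpM2l //.
exact: le_add_pow4_div (enorm_ge0 _) w0.
Qed.

End Coupling.

Section Wasserstein.
Variables (R : realType) (d : nat).
Local Notation Rd := (Rd R d).
Variables (D : set 'rV[R]_d) (mu1 mu2 : probability Rd R) (B : R).
Hypotheses (cD : closed D) (mu1D : mu1 (D : set Rd) = 1%E)
  (mu2D : mu2 (D : set Rd) = 1%E)
  (DB : forall x y, D x -> D y -> enorm (x - y) <= B).

Local Notation cost4 pi := (\int[pi]_z (enorm ((z.1 : 'rV[R]_d) - z.2) ^+ 4)%:E)%E.
Local Notation W4cost := (ereal_inf [set c | exists pi,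
  is_coupling mu1 mu2 pi /\ c = cost4 pi]).

Lemma W4cost_ge0 : (0 <= W4cost)%E.
Proof.
apply/ereal_infP => _ [pi [_ ->]]; apply: integral_ge0 => z _.
by rewrite lee_fin exprn_ge0 ?enorm_ge0.
Qed.

(* Without finiteness, [fine] would turn an infinite infimum into the junk
   value [W4 mu1 mu2 = 0]. *)
Lemma W4cost_fin_num : W4cost \is a fin_num.
Proof.
rewrite ge0_fin_numE; last exact: W4cost_ge0.
pose pi : probability (Rd * Rd)%type R := (mu1 \x mu2)%E.
have pi12 : is_coupling mu1 mu2 pi := product_is_coupling mu1 mu2.
apply: le_lt_trans (ltry (B ^+ 4)); apply: ge_ereal_inf.
by exists (cost4 pi); [exists pi | exact: (coupling_dist4_le cD mu1D mu2D pi12 DB)].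
Qed.

Lemma W4_ge0 : 0 <= W4 mu1 mu2.
Proof. exact: powR_ge0. Qed.

Lemma W4_pow4 : W4 mu1 mu2 ^+ 4 = fine W4cost.
Proof.
have c0 : 0 <= fine W4cost by rewrite fine_ge0 // W4cost_ge0.
rewrite /W4 -powR_mulrn ?powR_ge0 // -powRrM mulVf ?pnatr_eq0 //.
exact: powRr1.
Qed.

Lemma W4_near_coupling (e : R) : 0 < e ->
  exists2 pi, is_coupling mu1 mu2 pi & (cost4 pi <= (W4 mu1 mu2 ^+ 4 + e)%:E)%E.
Proof.
move=> e0; have : (W4cost < (fine W4cost + e)%:E)%E.
  by rewrite -{1}(fineK W4cost_fin_num) lte_fin ltrDl.
by move/ereal_inf_lt => [_ [pi [pi12 ->]] /ltW]; exists pi; rewrite ?W4_pow4.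
Qed.

Lemma Rintegral_lipschitz_W4 (g : 'rV[R]_d -> R) (K Bg : R) :
  0 <= K -> (forall x, D x -> `|g x| <= Bg) ->
  (forall x y, D x -> D y -> `|g x - g y| <= K * enorm (x - y)) ->
  `|Rintegral mu1 (D : set Rd) g - Rintegral mu2 (D : set Rd) g| <=
  2 * K * W4 mu1 mu2.
Proof.
move=> K0 gB gK; set W := W4 mu1 mu2; set Dl := `|_ - _|.
suff Dl_le eps : 0 < eps -> Dl <= 2 * K * W + 3 * K * eps.
  apply/ler_addgt0Pr => e e0; have K1 : 0 < 3 * K + 1 by rewrite ltr_wpDl ?mulr_ge0.
  apply: le_trans (Dl_le _ (divr_gt0 e0 K1)) _; rewrite lerD2l.
  by rewrite mulrCA ger_pMr // ler_pdivrMr // mul1r lerDl.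
move=> eps0; set w := W + eps.
have w0 : 0 < w by rewrite ltr_wpDl ?W4_ge0.
have w30 : 0 < w ^+ 3 by rewrite exprn_gt0.
have [pi pi12 cost_pi] := W4_near_coupling (mulr_gt0 eps0 w30).
have := coupling_Rintegral_lipschitz cD mu1D mu2D pi12 K0 w0 gB gK.
have c0 : (0 <= (K / w ^+ 3)%:E)%E by rewrite lee_fin divr_ge0 // ltW.
move=> /le_trans /(_ (leeD2l _ (lee_wpmul2l c0 cost_pi))).
rewrite -EFinM -EFinD lee_fin -/W -/Dl.
have -> : K / w ^+ 3 * (W ^+ 4 + eps * w ^+ 3) = K * (W ^+ 4 / w ^+ 3) + K * eps.
  by field; rewrite gt_eqF.
have : K * (W ^+ 4 / w ^+ 3) <= K * w.
  rewrite ler_wpM2l // ler_pdivrMr // -exprS lerXn2r ?nnegrE ?W4_ge0 //.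
  - exact: ltW.
  - by rewrite lerDl ltW.
have : K * w = K * W + K * eps by rewrite mulrDr.
lra.
Qed.

End Wasserstein.

Section WeightedMean.
Variables (R : realType) (d : nat).
Local Notation Rd := (Rd R d).
Variables (D : set 'rV[R]_d) (f : 'rV[R]_d -> R) (alpha Lf B Fmax : R).
Hypotheses (cD : closed D) (alpha_gt0 : 0 < alpha) (Lf_ge0 : 0 <= Lf)
  (B_ge0 : 0 <= B) (DB : forall x, D x -> forall j, `|x ord0 j| <= B)
  (f_ge0 : forall x, D x -> 0 <= f x) (f_le : forall x, D x -> f x <= Fmax)
  (f_lip : forall x y, D x -> D y -> `|f x - f y| <= Lf * enorm (x - y)).

Local Notation wgt x := (expR (- alpha * f x)).

Lemma weight_bounds x : D x -> expR (- alpha * Fmax) <= wgt x <= 1.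
Proof.
move=> Dx; rewrite -expR0 !ler_expR !mulNr lerN2 oppr_le0 ler_pM2l //.
by rewrite f_le // mulr_ge0 ?f_ge0 // ltW.
Qed.

Lemma weight_lipschitz x y : D x -> D y ->
  `|wgt x - wgt y| <= alpha * Lf * enorm (x - y).
Proof.
move=> Dx Dy; have afx_le0 z : D z -> - alpha * f z <= 0.
  by move=> Dz; rewrite mulNr oppr_le0 mulr_ge0 ?f_ge0 // ltW.
apply: le_trans (expR_lipschitz_nonpos (afx_le0 _ Dx) (afx_le0 _ Dy)) _.
by rewrite -mulrBr normrM normrN (gtr0_norm alpha_gt0) -mulrA ler_pM2l // f_lip.
Qed.

Lemma weighted_coord_bound j x : D x -> `|x ord0 j * wgt x| <= B.
Proof.
move=> Dx; have /andP[_ w1] := weight_bounds Dx.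
rewrite normrM (gtr0_norm (expR_gt0 _)) -[B]mulr1.
by rewrite ler_pM ?expR_ge0 ?DB.
Qed.

Lemma weighted_coord_lipschitz j x y : D x -> D y ->
  `|x ord0 j * wgt x - y ord0 j * wgt y| <=
  (1 + B * (alpha * Lf)) * enorm (x - y).
Proof.
move=> Dx Dy; have /andP[_ wx1] := weight_bounds Dx.
have -> : x ord0 j * wgt x - y ord0 j * wgt y =
    (x ord0 j - y ord0 j) * wgt x + y ord0 j * (wgt x - wgt y) by ring.
apply: le_trans (ler_normD _ _) _; rewrite [leRHS]mulrDl mul1r -mulrA.
apply: lerD; rewrite normrM.
  rewrite (gtr0_norm (expR_gt0 _)) -[enorm _]mulr1 ler_pM ?expR_ge0 //.
  by have := coord_le_enorm (x - y) j; rewrite !mxE.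
by rewrite ler_pM ?DB ?weight_lipschitz.
Qed.

Lemma Xbar_coord_lipschitz_W4 : exists2 C, 0 <= C &
  forall (mu1 mu2 : probability Rd R) j,
    mu1 (D : set Rd) = 1%E -> mu2 (D : set Rd) = 1%E ->
    `|Xbar D alpha f mu1 ord0 j - Xbar D alpha f mu2 ord0 j| <= C * W4 mu1 mu2.
Proof.
set m := expR (- alpha * Fmax); have m0 : 0 < m := expR_gt0 _.
set KD := alpha * Lf; have KD0 : 0 <= KD by rewrite mulr_ge0 // ltW.
set KN := 1 + B * KD; have KN0 : 0 <= KN by rewrite addr_ge0 // mulr_ge0.
exists (2 * KN / m + B * (2 * KD) / m ^+ 2).
  by rewrite addr_ge0 // divr_ge0 ?exprn_ge0 ?mulr_ge0 // ltW.
move=> mu1 mu2 j mu1D mu2D; rewrite !mxE.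
have mD := Rd_closed_measurable cD.
have diam x y : D x -> D y -> enorm (x - y) <= d%:R * (2 * B).
  by move=> Dx Dy; apply: enorm_sub_le_coord_bound; exact: DB.
have mw : measurable_fun (D : set Rd) (fun x : Rd => wgt x).
  exact: lipschitz_measurable_fun cD weight_lipschitz.
have /andP[m_le1 _] := Rintegral_bounds mD mw mu1D weight_bounds.
have /andP[m_le2 _] := Rintegral_bounds mD mw mu2D weight_bounds.
have N2B : `|Rintegral mu2 (D : set Rd) (fun x => x ord0 j * wgt x)| <= B.
  rewrite ler_norml; apply: Rintegral_bounds => // [|x Dx].
    exact: lipschitz_measurable_fun cD (weighted_coord_lipschitz j).
  by rewrite -ler_norml weighted_coord_bound.
apply: le_trans (dist_div_le _ m0 m_le1 m_le2 N2B) _.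
have dN := Rintegral_lipschitz_W4 cD mu1D mu2D diam KN0
  (weighted_coord_bound j) (weighted_coord_lipschitz j).
have wB x : D x -> `|wgt x| <= 1.
  by move=> Dx; rewrite gtr0_norm ?expR_gt0 //; case/andP: (weight_bounds Dx).
have dW := Rintegral_lipschitz_W4 cD mu1D mu2D diam KD0 wB weight_lipschitz.
rewrite mulrDl; apply: lerD.
  by rewrite [leRHS]mulrAC ler_pM2r ?invr_gt0 //; exact: dN.
have -> : B * (2 * KD) / m ^+ 2 * W4 mu1 mu2 = B * (2 * KD * W4 mu1 mu2) / m ^+ 2.
  by ring.
by rewrite ler_pM2r ?invr_gt0 ?exprn_gt0 // ler_wpM2l.
Qed.

End WeightedMean.

Lemma Xbar_closure_lipschitz_W4 (R : realType) (d : nat) (G : set 'rV[R]_d)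
    (f : 'rV[R]_d -> R) (L_f alpha M : R) :
  G !=set0 -> (forall x, G x -> enorm x <= M) ->
  (forall x, closure G x -> 0 <= f x) ->
  (forall x y, closure G x -> closure G y ->
     `|f x - f y| <= L_f * enorm (x - y)) -> 0 < alpha ->
  exists2 C, 0 <= C & forall (mu1 mu2 : probability (Rd R d) R) j,
    probOn (closure G) mu1 -> probOn (closure G) mu2 ->
    `|Xbar (closure G) alpha f mu1 ord0 j - Xbar (closure G) alpha f mu2 ord0 j|
      <= C * W4 mu1 mu2.
Proof.
move=> [x0 Gx0] GM f_ge0 f_lip alpha_gt0.
set D := closure G; have cD : closed D := @closed_closure _ G.
have DB := closure_coord_le GM; set B := `|M| + 1 in DB.
have B0 : 0 <= B by rewrite addr_ge0.
have f_lip' x y : D x -> D y -> `|f x - f y| <= `|L_f| * enorm (x - y).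
  by move=> Dx Dy; rewrite (le_trans (f_lip x y Dx Dy)) ?ler_wpM2r ?enorm_ge0 ?ler_norm.
have f_le x : D x -> f x <= f x0 + `|L_f| * (d%:R * (2 * B)).
  have Dx0 : D x0 := subset_closure Gx0.
  move=> Dx; have := f_lip' x x0 Dx Dx0; rewrite ler_norml => /andP[_].
  rewrite lerBlDl => /le_trans; apply; rewrite lerD2l ler_wpM2l //.
  by apply: enorm_sub_le_coord_bound; exact: DB.
exact: Xbar_coord_lipschitz_W4 cD alpha_gt0 (normr_ge0 L_f) B0 DB f_ge0 f_le f_lip'.
Qed.

Lemma bdrift_sdiff_dist (R : realType) (d : nat) (Gbar : set 'rV[R]_d) alpha f
    (beta sigma t s : R) (x y : 'rV[R]_d) (mu1 mu2 : probability (Rd R d) R) :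
  enorm (bdrift Gbar alpha f beta t x mu1 - bdrift Gbar alpha f beta s y mu2)
  + fnorm (sdiff Gbar alpha f sigma t x mu1 - sdiff Gbar alpha f sigma s y mu2) =
  (`|beta| + `|sigma|) *
    enorm ((x - Xbar Gbar alpha f mu1) - (y - Xbar Gbar alpha f mu2)).
Proof. by rewrite -!scalerBr -diag_mxB enormZ fnormZ_diag_mx mulrDl. Qed.

Theorem lemma3p7 (R : realType) (d : nat) (G : set 'rV[R]_d)
  (f : 'rV[R]_d -> R) (L_f alpha beta sigma : R) :
  bounded_domain G -> C3_boundary G ->
  (forall x, closure G x -> 0 <= f x) ->
  0 < inf (f @` closure G) ->
  (exists! x, closure G x /\ forall y, closure G y -> f x <= f y) ->
  (forall x y, closure G x -> closure G y ->
     `|f x - f y| <= L_f * enorm (x - y)) ->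
  0 < alpha -> 0 < beta -> 0 < sigma ->
  (exists L : R, 0 < L /\
    forall (t : R) (x y : 'rV[R]_d) (mu1 mu2 : probability (Rd R d) R),
      0 <= t -> closure G x -> closure G y ->
      probOn (closure G) mu1 -> probOn (closure G) mu2 ->
      enorm (bdrift (closure G) alpha f beta t x mu1
             - bdrift (closure G) alpha f beta t y mu2)
      + fnorm (sdiff (closure G) alpha f sigma t x mu1
               - sdiff (closure G) alpha f sigma t y mu2)
      <= L * (enorm (x - y) + W4 mu1 mu2))
  /\ (forall (x : 'rV[R]_d) (mu : probability (Rd R d) R),
        closure G x -> probOn (closure G) mu ->
        continuous (fun t : R => bdrift (closure G) alpha f beta t x mu) /\
        continuous (fun t : R => sdiff (closure G) alpha f sigma t x mu)).
Proof.
move=> [G0 [_ [_ [M GM]]]] _ f_ge0 _ _ f_lip alpha_gt0 beta_gt0 sigma_gt0.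
split=> [|x mu _ _]; last by split; exact: cst_continuous.
have [C C0 XC] := Xbar_closure_lipschitz_W4 G0 GM f_ge0 f_lip alpha_gt0.
exists ((beta + sigma) * d%:R * (1 + C) + 1).
split=> [|t x y mu1 mu2 _ _ _ mu1D mu2D].
  by rewrite ltr_wpDl // !mulr_ge0 ?addr_ge0 // ltW.
rewrite bdrift_sdiff_dist (gtr0_norm beta_gt0) (gtr0_norm sigma_gt0).
have W0 := W4_ge0 mu1 mu2.
have := enorm_sub_shift_le x y C0 W0 (fun j => XC mu1 mu2 j mu1D mu2D).
move=> /(ler_wpM2l (addr_ge0 (ltW beta_gt0) (ltW sigma_gt0))) /le_trans; apply.
by rewrite [leRHS]mulrDl mul1r !mulrA lerDl addr_ge0 ?enorm_ge0.
Qed.
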